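(* Let $p$ be an odd prime and let $\sim$ be a nontrivial equivalence relation on $\mathbb{Z}_p^\times = \mathbb{Z}_p - \{0\}$ such that for $x \neq y$, $x \sim y$ implies $(y-x) \sim (-x)$. Then: (1) for every $x \in \mathbb{Z}_p^\times$, $x \not\sim (-x)$; (2) if $x,y$ are distinct elements of some equivalence class, then $y-x$ does not belong to that class; (3) if $x \sim y$ and $x \neq y$, then $(-x) \not\sim (-y)$; (4) if $x,y$ and $z,w$ are two pairs of distinct elements of some equivalence class (i.e. $x\neq y$, $z \neq w$, all four in the same class) and $x-y=z-w$, then $x=z$ and $y=w$.
   Context: An equivalence relation is nontrivial if it has at least two equivalence classes. *)

(* Z_p = 'F_p (prime p); Z_p^x = nonzero elements of 'F_p. *)
From mathcomp Require Import all_boot all_order all_algebra.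
Set Implicit Arguments. Unset Strict Implicit. Unset Printing Implicit Defensive.
Import GRing.Theory.
Local Open Scope ring_scope.

Definition equiv_on_units (p : nat) (R : 'F_p -> 'F_p -> Prop) : Prop :=
  [/\ (forall x : 'F_p, x != 0 -> R x x),
      (forall x y : 'F_p, x != 0 -> y != 0 -> R x y -> R y x) &
      (forall x y z : 'F_p, x != 0 -> y != 0 -> z != 0 ->
          R x y -> R y z -> R x z)].

Definition nontrivial_on_units (p : nat) (R : 'F_p -> 'F_p -> Prop) : Prop :=
  exists x y : 'F_p, [/\ x != 0, y != 0 & ~ R x y].

From mathcomp Require Import all_boot all_order all_algebra.

Set Implicit Arguments.
Unset Strict Implicit.
Unset Printing Implicit Defensive.

Import GRing.Theory.
Local Open Scope ring_scope.

(* If x ~ -x, then z ~ x with z <> -x gives -x ~ z, which the shift property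
   turns into z + x ~ x; so every nonzero multiple of x, i.e. every unit of
   Z_p, lies in the class of x, contradicting nontriviality.  With (1) in hand,
   each of (2)-(4) reduces to an instance of x ~ -x: e.g. in (4) the shifts of
   (x, y) and (z, w) are y - x ~ -x and w - z ~ -z, and y - x = w - z, so
   -x ~ -z, whence x = z by (3). *)

Section ShiftInvariantEquivalence.

Variables (V : zmodType) (R : V -> V -> Prop).

Hypothesis Rrefl : forall x, x != 0 -> R x x.
Hypothesis Rsym : forall x y, x != 0 -> y != 0 -> R x y -> R y x.
Hypothesis Rtrans : forall x y z, x != 0 -> y != 0 -> z != 0 ->
  R x y -> R y z -> R x z.
Hypothesis Rshift : forall x y, x != 0 -> y != 0 -> x != y ->
  R x y -> R (y - x) (- x).

Lemma R_mulrn_of_R_opp x k :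
  x != 0 -> R x (- x) -> x *+ k != 0 -> R x (x *+ k).
Proof.
move=> x_neq0 Rxox; have ox_neq0 : - x != 0 by rewrite oppr_eq0.
elim: k => [|k IHk]; first by rewrite eqxx.
rewrite mulrSr; have [->|xk_neq0] := eqVneq (x *+ k) 0.
  by rewrite add0r => _; exact: Rrefl.
move=> xkx_neq0; have Rxxk := IHk xk_neq0.
have ox_neq_xk : - x != x *+ k.
  by apply: contraNneq xkx_neq0 => <-; rewrite addNr.
have := Rshift ox_neq0 xk_neq0 ox_neq_xk
  (Rtrans ox_neq0 x_neq0 xk_neq0 (Rsym x_neq0 ox_neq0 Rxox) Rxxk).
by rewrite opprK; apply: Rsym; rewrite ?oppr_eq0.
Qed.

Lemma not_R_opp :
  (forall x y : V, x != 0 -> exists k, x *+ k = y) ->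
  (exists a b, [/\ a != 0, b != 0 & ~ R a b]) ->
  forall x, x != 0 -> ~ R x (- x).
Proof.
move=> cyclicV [a [b [a_neq0 b_neq0 nRab]]] x x_neq0 Rxox.
have Rx y : y != 0 -> R x y.
  by move=> y_neq0; have [k xk_y] := cyclicV x y x_neq0; subst y;
    exact: R_mulrn_of_R_opp.
have Rax : R a x := Rsym x_neq0 a_neq0 (Rx a a_neq0).
exact: nRab (Rtrans a_neq0 x_neq0 b_neq0 Rax (Rx b b_neq0)).
Qed.

Hypothesis Rnopp : forall x, x != 0 -> ~ R x (- x).

Let subr_neq0 {x y : V} : x != y -> y - x != 0.
Proof. by rewrite subr_eq0 eq_sym. Qed.

Lemma not_R_sub x y : x != 0 -> y != 0 -> x != y -> R x y -> ~ R (y - x) x.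
Proof.
move=> x_neq0 y_neq0 x_neq_y Rxy Ryxx; have yx_neq0 := subr_neq0 x_neq_y.
apply: (Rnopp x_neq0); apply: (Rtrans x_neq0 yx_neq0); rewrite ?oppr_eq0 //.
- exact: Rsym.
- exact: Rshift.
Qed.

Lemma not_R_opp_opp x y :
  x != 0 -> y != 0 -> x != y -> R x y -> ~ R (- x) (- y).
Proof.
move=> x_neq0 y_neq0 x_neq_y Rxy Roxoy.
have [ox_neq0 oy_neq0] : - x != 0 /\ - y != 0 by rewrite !oppr_eq0.
have yx_neq0 := subr_neq0 x_neq_y.
have R_yx_ox : R (y - x) (- x) := Rshift x_neq0 y_neq0 x_neq_y Rxy.
have R_yx_y : R (y - x) y.
  have oy_neq_ox : - y != - x by rewrite eqr_opp eq_sym.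
  by have := Rshift oy_neq0 ox_neq0 oy_neq_ox (Rsym ox_neq0 oy_neq0 Roxoy);
    rewrite opprK addrC.
apply: (Rnopp y_neq0); apply: (Rtrans y_neq0 ox_neq0 oy_neq0) => //.
exact: Rtrans (Rsym yx_neq0 y_neq0 R_yx_y) R_yx_ox.
Qed.

Lemma R_subr_inj x y z w :
  x != 0 -> y != 0 -> z != 0 -> w != 0 -> x != y -> z != w ->
  R x y -> R x z -> R x w -> x - y = z - w -> x = z /\ y = w.
Proof.
move=> x_neq0 y_neq0 z_neq0 w_neq0 x_neq_y z_neq_w Rxy Rxz Rxw xy_zw.
have Rzw : R z w := Rtrans z_neq0 x_neq0 w_neq0 (Rsym x_neq0 z_neq0 Rxz) Rxw.
have R_ox_oz : R (- x) (- z).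
  have [ox_neq0 oz_neq0] : - x != 0 /\ - z != 0 by rewrite !oppr_eq0.
  have wz_neq0 := subr_neq0 z_neq_w.
  have yx_wz : y - x = w - z by rewrite -opprB xy_zw opprB.
  have := Rshift x_neq0 y_neq0 x_neq_y Rxy; rewrite yx_wz => R_wz_ox.
  apply: (Rtrans ox_neq0 wz_neq0 oz_neq0); first exact: Rsym.
  exact: Rshift.
have x_eq_z : x = z.
  have [//|x_neq_z] := eqVneq x z.
  by case: (not_R_opp_opp x_neq0 z_neq0 x_neq_z Rxz R_ox_oz).
by move: xy_zw; rewrite x_eq_z => /addrI/oppr_inj.
Qed.

End ShiftInvariantEquivalence.

Lemma Fp_mulrn_div (p : nat) (x y : 'F_p) : x != 0 -> x *+ (y / x : 'F_p) = y.
Proof. by move=> x_neq0; rewrite -mulr_natr natr_Zp mulrC divfK. Qed.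

Theorem proposition3p15 (p : nat) (p_prime : prime p) (p_odd : (2 < p)%N)
  (R : 'F_p -> 'F_p -> Prop)
  (R_equiv : equiv_on_units R)
  (R_nontriv : nontrivial_on_units R)
  (R_shift : forall x y : 'F_p, x != 0 -> y != 0 -> x != y ->
      R x y -> R (y - x) (- x)) :
  (* (1) *)
  (forall x : 'F_p, x != 0 -> ~ R x (- x)) /\
  (* (2) *)
  (forall x y : 'F_p, x != 0 -> y != 0 -> x != y -> R x y -> ~ R (y - x) x) /\
  (* (3) *)
  (forall x y : 'F_p, x != 0 -> y != 0 -> x != y -> R x y -> ~ R (- x) (- y)) /\
  (* (4) *)
  (forall x y z w : 'F_p, x != 0 -> y != 0 -> z != 0 -> w != 0 ->
      x != y -> z != w -> R x y -> R x z -> R x w ->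
      x - y = z - w -> x = z /\ y = w).
Proof.
case: R_equiv => Rrefl Rsym Rtrans.
have cyclicFp (x y : 'F_p) : x != 0 -> exists k, x *+ k = y.
  by move=> x_neq0; exists (y / x : 'F_p); exact: Fp_mulrn_div.
have Rnopp := not_R_opp Rrefl Rsym Rtrans R_shift cyclicFp R_nontriv.
split; first exact: Rnopp.
split; first exact: not_R_sub Rsym Rtrans R_shift Rnopp.
split; first exact: not_R_opp_opp Rsym Rtrans R_shift Rnopp.
exact: R_subr_inj Rsym Rtrans R_shift Rnopp.
Qed.
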